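(* Let $R$ be a discrete valuation ring with maximal ideal $\mathfrak{m}$, and let $M$ be an $R$-module with $M\cong\bigoplus_{1\le i\le n}R/\mathfrak{m}^{k_i}$, where $k_1\ge\cdots\ge k_n$ are non-negative integers. Let $N$ be a quotient of $M$ generated by $j$ elements, where $j\le n$. Then the length satisfies $l(N)\le k_1+\cdots+k_j$. Moreover, if equality holds, then $N$ is a direct summand of $M$. *)

From HB Require Import structures.
From mathcomp Require Import all_boot all_order all_algebra.
Set Implicit Arguments. Unset Strict Implicit. Unset Printing Implicit Defensive.
Import GRing.Theory.
Local Open Scope ring_scope.

Definition is_dvr (R : idomainType) : Prop :=
  exists pi : R, pi != 0 /\ pi \isn't a GRing.unit /\
    forall x : R, x != 0 ->
      exists (u : R) (n : nat), u \is a GRing.unit /\ x = u * pi ^+ n.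

Definition max_ideal (R : idomainType) : R -> Prop :=
  fun x => x \isn't a GRing.unit.

Definition ideal_pow (R : idomainType) (I : R -> Prop) (k : nat) : R -> Prop :=
  fun x => exists s : seq (R * k.-tuple R),
    (forall t, t \in s -> forall r, r \in tval t.2 -> I r) /\
    x = \sum_(t <- s) (t.1 * \prod_(r <- tval t.2) r).

Definition is_submod (R : idomainType) (M : lmodType R) (S : M -> Prop) : Prop :=
  S 0 /\ forall (a : R) (x y : M), S x -> S y -> S (a *: x + y).

Definition strict_sub (T : Type) (S S' : T -> Prop) : Prop :=
  (forall x, S x -> S' x) /\ exists x, S' x /\ ~ S x.

Definition submod_chain (R : idomainType) (M : lmodType R)
    (S : nat -> M -> Prop) (r : nat) : Prop :=
  (forall i, (i <= r)%N -> is_submod (S i)) /\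
  (forall i, (i < r)%N -> strict_sub (S i) (S i.+1)).

Definition length_le (R : idomainType) (M : lmodType R) (l : nat) : Prop :=
  forall S r, @submod_chain R M S r -> (r <= l)%N.

Definition has_length (R : idomainType) (M : lmodType R) (l : nat) : Prop :=
  length_le M l /\ exists S, @submod_chain R M S l.

(* M is isomorphic to the direct sum of R/I^{k_i}, i < n, witnessed by
   e : 'I_n -> M (e i = image of 1 in the i-th summand). *)
Definition is_sum_of_cyclics (R : idomainType) (M : lmodType R)
    (I : R -> Prop) (n : nat) (k : 'I_n -> nat) : Prop :=
  exists e : 'I_n -> M,
    (forall x : M, exists a : 'I_n -> R, x = \sum_(i < n) a i *: e i) /\
    (forall a : 'I_n -> R,
        \sum_(i < n) a i *: e i = 0 <-> forall i, ideal_pow I (k i) (a i)).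

Definition generated_by (R : idomainType) (N : lmodType R) (j : nat) : Prop :=
  exists g : 'I_j -> N, forall y : N,
    exists a : 'I_j -> R, y = \sum_(i < j) a i *: g i.

(* The quotient N of M via the surjection f is a direct summand of M:
   ker f has a complementary submodule C (so C ~ N and M = C (+) ker f). *)
Definition quotient_is_summand (R : idomainType) (M N : lmodType R)
    (f : M -> N) : Prop :=
  exists C : M -> Prop, is_submod C /\
    (forall x, C x -> f x = 0 -> x = 0) /\
    (forall x, exists c y, C c /\ f y = 0 /\ x = c + y).

(* Write N = M/K with K = ker f and let p be a uniformizer. Filter M/K by the
   images of p^t M: the t-th layer is killed by p, hence a vector space over R/p,
   spanned both by the images of the j generators of N and by the p^t e_i with
   k_i > t, so it has length at most min(j, #{i | k_i > t}); for non-increasing k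
   these bounds add up to k_1 + ... + k_j.  If the bound is attained, the top layer
   is nonzero, so some lift x of a generator has p^(t-1) x outside K, where
   t = max k_i.  Then x has a unit coordinate on some e_i with k_i = t, so R x is a
   summand of M of length t meeting K trivially, and induction on j inside the
   complementary summand builds a complement of K. *)

From HB Require Import structures.
From mathcomp Require Import all_boot all_order all_algebra.
From mathcomp Require Import boolp classical_sets.
Set Implicit Arguments. Unset Strict Implicit. Unset Printing Implicit Defensive.
Import GRing.Theory.
Local Open Scope ring_scope.

Section Length.
Local Open Scope classical_set_scope.
Variables (R : idomainType) (M : lmodType R).
Implicit Types (A B C U : set M) (S : nat -> set M).

Section Closure.
Variable U : set M.
Hypothesis hU : is_submod U.

Lemma submod0 : U 0. Proof. by case: hU. Qed.

Lemma submodZD a x y : U x -> U y -> U (a *: x + y).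
Proof. exact: hU.2. Qed.

Lemma submodD x y : U x -> U y -> U (x + y).
Proof. by rewrite -[x in x + _]scale1r; apply: submodZD. Qed.

Lemma submodZ a x : U x -> U (a *: x).
Proof. by move=> Ux; rewrite -[_ *: _]addr0; apply: submodZD Ux submod0. Qed.

Lemma submodN x : U x -> U (- x).
Proof. by rewrite -scaleN1r; apply: submodZ. Qed.

Lemma submodB x y : U x -> U y -> U (x - y).
Proof. by move=> Ux /submodN; apply: submodD. Qed.

Lemma submod_sum (I : finType) (P : pred I) (F : I -> M) :
  (forall i, P i -> U (F i)) -> U (\sum_(i | P i) F i).
Proof. by move=> UF; apply: (big_ind U) => //; [apply: submod0 | apply: submodD]. Qed.

End Closure.

Definition addm A B : set M := [set a + b | a in A & b in B].

Lemma submodI A B : is_submod A -> is_submod B -> is_submod (A `&` B).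
Proof.
move=> hA hB; split=> [|a x y [Ax Bx] [Ay By]]; first by split; apply: submod0.
by split; apply: submodZD.
Qed.

Lemma submod_addm A B : is_submod A -> is_submod B -> is_submod (addm A B).
Proof.
move=> hA hB; split=> [|c _ _ [a Aa [b Bb <-]] [a' Aa' [b' Bb' <-]]].
  by exists 0; [apply: submod0 | exists 0; [apply: submod0 | rewrite addr0]].
exists (c *: a + a'); first exact: submodZD.
by exists (c *: b + b'); [apply: submodZD | rewrite scalerDr addrACA].
Qed.

Lemma addm_subl A B : is_submod B -> A `<=` addm A B.
Proof. by move=> hB a Aa; exists a => //; exists 0; [apply: submod0 | rewrite addr0]. Qed.

Lemma addm_subr A B : is_submod A -> B `<=` addm A B.
Proof. by move=> hA b Bb; exists 0; [apply: submod0 | exists b => //; rewrite add0r]. Qed.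

Lemma addm_sub A B U : is_submod U -> A `<=` U -> B `<=` U -> addm A B `<=` U.
Proof. by move=> hU AU BU _ [a /AU Ua [b /BU Ub <-]]; apply: submodD. Qed.

Definition span m (Q : pred 'I_m) (g : 'I_m -> M) : set M :=
  [set x | exists a : 'I_m -> R, x = \sum_(l | Q l) a l *: g l].

Definition line (g : M) : set M := [set x | exists c, x = c *: g].

Lemma span_submod m (Q : pred 'I_m) g : is_submod (span Q g).
Proof.
split=> [|c _ _ [a ->] [b ->]]; first by exists (fun=> 0); rewrite big1 // => l; rewrite scale0r.
exists (fun l => c * a l + b l); rewrite scaler_sumr -big_split /=.
by apply: eq_bigr => l _; rewrite scalerDl scalerA.
Qed.

Lemma line_submod g : is_submod (line g).
Proof.
split=> [|c _ _ [a ->] [b ->]]; first by exists 0; rewrite scale0r.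
by exists (c * a + b); rewrite scalerDl scalerA.
Qed.

Lemma span_subset m (Q Q' : pred 'I_m) g : subpred Q' Q -> span Q' g `<=` span Q g.
Proof.
move=> Q'Q _ [a ->]; exists (fun l => if Q' l then a l else 0).
rewrite [RHS]big_mkcond [LHS]big_mkcond /=; apply: eq_bigr => l _.
by case: ifP => [/Q'Q -> // | _]; rewrite scale0r if_same.
Qed.

Lemma span_gen m (Q : pred 'I_m) g l : Q l -> span Q g (g l).
Proof.
move=> Ql; exists (fun l' => (l' == l)%:R); rewrite (bigD1 l) //= eqxx scale1r.
by rewrite big1 ?addr0 // => l' /andP[_ /negbTE ->]; rewrite scale0r.
Qed.

Lemma sumrD1 m (Q : pred 'I_m) (F : 'I_m -> M) l : Q l ->
  \sum_(l' | Q l') F l' = F l + \sum_(l' | [predD1 Q & l] l') F l'.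
Proof. by move=> Ql; rewrite (bigD1 l Ql); congr (_ + _); apply: eq_bigl => l'; rewrite andbC. Qed.

Lemma span_D1 m (Q : pred 'I_m) g l : Q l ->
  span Q g `<=` addm (span [predD1 Q & l] g) (line (g l)).
Proof.
move=> Ql _ [a ->]; exists (\sum_(l' | [predD1 Q & l] l') a l' *: g l'); first by exists a.
exists (a l *: g l); first by exists (a l).
by rewrite [RHS](sumrD1 _ Ql) addrC.
Qed.

Lemma span_card0 m (Q : pred 'I_m) g : #|Q| = 0%N -> span Q g `<=` [set 0].
Proof. by move=> /card0_eq Q0 _ [a ->]; rewrite big_pred0. Qed.

(* Chains need not be strict: [jumps] counts their strict steps, so
   [length_le_between A B l] says that l(B/A) <= l. *)
Definition chain_between A B S r :=
  (forall i, (i <= r)%N -> [/\ is_submod (S i), A `<=` S i & S i `<=` B]) /\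
  (forall i, (i < r)%N -> S i `<=` S i.+1).

Definition jump S i := exists2 x, S i.+1 x & ~ S i x.

Definition jumps S r := (\sum_(i < r) `[< jump S i >])%N.

Definition length_le_between A B l :=
  forall S r, chain_between A B S r -> (jumps S r <= l)%N.

Lemma chain_between_le A B S r i i' : chain_between A B S r ->
  (i <= i')%N -> (i' <= r)%N -> S i `<=` S i'.
Proof.
move=> [_ incr] /subnK <-; elim: (i' - i)%N => [|d IH] le_r //.
by apply: subset_trans (IH (ltnW le_r)) (incr _ le_r).
Qed.

Lemma chain_betweenI A B C S r : is_submod C -> chain_between A B S r ->
  chain_between (A `&` C) (B `&` C) (fun i => S i `&` C) r.
Proof.
move=> hC [chS incr]; split=> [i le_ir | i lt_ir]; last exact: setSI (incr i lt_ir).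
by have [hSi ASi SiB] := chS i le_ir; split; [apply: submodI | apply: setSI | apply: setSI].
Qed.

Lemma chain_between_addm A B C S r : is_submod C -> chain_between A B S r ->
  chain_between C (addm B C) (fun i => addm (S i) C) r.
Proof.
move=> hC [chS incr]; split=> [i le_ir | i lt_ir z [s Ss [c Cc <-]]].
  have [hSi _ SiB] := chS i le_ir; split; [exact: submod_addm | exact: addm_subr |].
  by move=> _ [s /SiB Bs [c Cc <-]]; exists s => //; exists c.
by exists s; [apply: incr | exists c].
Qed.

Lemma chain_between_sub A A' B B' S r : A' `<=` A -> B `<=` B' ->
  chain_between A B S r -> chain_between A' B' S r.
Proof.
move=> A'A BB' [chS incr]; split=> // i le_ir.
by have [hSi ASi SiB] := chS i le_ir; split=> // x; [move/A'A/ASi | move/SiB/BB'].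
Qed.

Lemma length_le_between_sub A A' B B' l : A' `<=` A -> B `<=` B' ->
  length_le_between A' B' l -> length_le_between A B l.
Proof. by move=> A'A BB' len S r /(chain_between_sub A'A BB'); apply: len. Qed.

Lemma jumps_le_add S S1 S2 r :
  (forall i, (i < r)%N -> jump S i -> jump S1 i \/ jump S2 i) ->
  (jumps S r <= jumps S1 r + jumps S2 r)%N.
Proof.
move=> split_jump; rewrite /jumps -big_split /=; apply: leq_sum => i _.
case: (asboolP (jump S i)) => // /(split_jump i (ltn_ord i)).
by case=> /asboolP ->; rewrite ?addnS.
Qed.

Lemma length_le_between0 A B : B `<=` A -> length_le_between A B 0.
Proof.
move=> BA S r [chS _]; rewrite leqn0 /jumps big1 // => i _.
case: asboolP => // -[x Sx []]; have [_ ASi _] := chS i (ltnW (ltn_ord i)).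
by have [_ _ Si1B] := chS i.+1 (ltn_ord i); apply/ASi/BA/Si1B.
Qed.

(* Modular law: S i = S i.+1 as soon as they agree inside C and modulo C. *)
Lemma jump_split A B C S r i : is_submod C -> chain_between A B S r -> (i < r)%N ->
  jump S i -> jump (fun i => S i `&` C) i \/ jump (fun i => addm (S i) C) i.
Proof.
move=> hC [chS incr] lt_ir [x Sx notSx].
have [[hSi _ _] [hSi1 _ _]] := (chS i (ltnW lt_ir), chS i.+1 lt_ir).
have [[s Ss [c Cc def_x]]|notSCx] := pselect (addm (S i) C x); last first.
  by right; exists x => //; apply: addm_subl.
left; exists c; last by case=> Sc _; apply: notSx; rewrite -def_x; apply: submodD.
by split=> //; rewrite -(addKr s c) def_x addrC; apply: submodB => //; apply: incr.
Qed.

Lemma length_le_between_trans A C B a b : A `<=` C -> C `<=` B ->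
  is_submod C -> is_submod B ->
  length_le_between A C a -> length_le_between C B b -> length_le_between A B (a + b).
Proof.
move=> AC CB hC hB lenAC lenCB S r chS.
apply: leq_trans (jumps_le_add (fun i lt_ir => jump_split hC chS lt_ir)) _.
apply: leq_add.
  apply: (length_le_between_sub _ _ lenAC (chain_betweenI hC chS)).
    by move=> x Ax; split; last exact: AC.
  exact: subIsetr.
apply: (length_le_between_sub _ _ lenCB (chain_between_addm hC chS)) => //.
exact: addm_sub.
Qed.

Lemma jumps_le1 S r :
  (forall i i', (i < i')%N -> (i' < r)%N -> jump S i -> ~ jump S i') ->
  (jumps S r <= 1)%N.
Proof.
rewrite /jumps; elim: r => [|r IH] no2; first by rewrite big_ord0.
rewrite big_ord_recr /=; case: (asboolP (jump S r)) => [jr|_]; last first.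
  by rewrite addn0; apply: IH => i i' lt_ii' lt_i'r; apply: no2 (ltnW _).
rewrite big1 // => i _; case: asboolP => // ji.
by case: (no2 i r (ltn_ord i) (ltnSn r) ji jr).
Qed.

Lemma span_split_unit m (P : pred 'I_m) g (a : 'I_m -> R) i : P i -> a i \is a GRing.unit ->
  span P g `<=` addm (line (\sum_(l | P l) a l *: g l)) (span [predD1 P & i] g).
Proof.
move=> Pi Ua _ [b ->]; set c := b i / a i.
exists (c *: \sum_(l | P l) a l *: g l); first by exists c.
exists (\sum_(l | [predD1 P & i] l) (b l - c * a l) *: g l).
  by exists (fun l => b l - c * a l).
rewrite !(sumrD1 _ Pi) scalerDr scaler_sumr scalerA divrK // -addrA; congr (_ + _).
rewrite -big_split; apply: eq_bigr => l _ /=.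
by rewrite scalerA -scalerDl addrC subrK.
Qed.

Definition generated_mod K U m (Q : pred 'I_m) (x : 'I_m -> M) :=
  [/\ K `<=` U, forall l, Q l -> U (x l) & U `<=` addm K (span Q x)].

Definition complement K U C :=
  [/\ is_submod C, C `<=` U, C `&` K `<=` [set 0] & U `<=` addm C K].

Lemma submod_set0 : is_submod [set 0 : M].
Proof. by split=> // a _ _ -> ->; rewrite scaler0 addr0. Qed.

Lemma complement0 K U : is_submod U -> U `<=` K -> complement K U [set 0].
Proof.
move=> hU UK; split=> [||_ [-> _] //|y Uy]; first exact: submod_set0.
  by move=> _ ->; apply: submod0.
by exists 0 => //; exists y; [apply: UK | rewrite add0r].
Qed.

Lemma generated_mod_reduce K U U' m (Q : pred 'I_m) x l0 :
  is_submod K -> is_submod U' -> U' `<=` U -> U `<=` addm (line (x l0)) U' -> Q l0 ->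
  generated_mod K U Q x ->
  exists x', generated_mod (addm K (line (x l0)) `&` U') U' [predD1 Q & l0] x'.
Proof.
move=> hK hU' U'U splitU Ql0 [_ Ux UKx]; set g := x l0.
have hD := submod_addm hK (line_submod g).
have /choice [x' def_x] : forall l, exists y, Q l -> U' y /\ exists c, x l = c *: g + y.
  move=> l; case: (boolP (Q l)) => [/Ux/splitU|_]; last by exists 0.
  by move=> [_ [c ->] [y U'y <-]]; exists y => _; split=> //; exists c.
exists x'; split=> [z []//|l /andP[_ /def_x[]]//|y U'y].
have [kk Kk [s [b ->] def_y]] := UKx y (U'U y U'y).
set w := \sum_(l | [predD1 Q & l0] l) b l *: x' l.
have U'w : U' w by apply: submod_sum => // l /andP[_ /def_x[U'x _]]; apply: submodZ.
exists (y - w); last by exists w; [exists b | rewrite subrK].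
split; last exact: submodB.
rewrite -def_y -addrA; apply: submodD (addm_subl (line_submod g) Kk) _ => //.
rewrite (sumrD1 _ Ql0) -addrA -sumrB; apply: submodD => //.
  by apply: (addm_subr hK); exists (b l0).
apply: submod_sum => // l /andP[_ Ql]; have [_ [c ->]] := def_x l Ql.
by rewrite -scalerBr addrK scalerA; apply: (addm_subr hK); exists (b l * c).
Qed.

Lemma complement_addm_line K U U' g C : is_submod K -> is_submod U -> U g -> U' `<=` U ->
  U `<=` addm (line g) U' -> (forall c, K (c *: g) -> c *: g = 0) ->
  complement (addm K (line g) `&` U') U' C -> complement K U (addm (line g) C).
Proof.
move=> hK hU Ug U'U splitU lineK [hC CU' CK'0 U'CK'].
split.
- exact: submod_addm (line_submod g) hC.
- apply: addm_sub => // [_ [c ->]|]; first exact: submodZ.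
  exact: subset_trans CU' U'U.
- move=> _ [[_ [c ->] [c' Cc' <-]] Kz].
  have c'0 : c' = 0.
    apply: CK'0; split=> //; split; last exact: CU'.
    rewrite -(addKr (c *: g) c'); apply: (submodD (submod_addm hK (line_submod g))).
      by apply: (addm_subr hK); exists (- c); rewrite scaleNr.
    exact: addm_subl (line_submod g) _ Kz.
  by move: Kz; rewrite c'0 addr0 => /lineK.
- move=> y /splitU [_ [c ->] [y' /U'CK' [c' Cc' [k' [[kk Kk [l [d def_l] def_k]] _]]]]].
  move=> def_y' def_y; rewrite -def_y -def_y' -def_k def_l.
  exists ((c + d) *: g + c'); first by exists ((c + d) *: g); [exists (c + d) | exists c'].
  exists kk => //; rewrite scalerDl -!addrA; congr (_ + _).
  by rewrite addrCA [d *: g + _]addrC.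
Qed.

Lemma jumps_le_cap_addm K U U' D S r : is_submod D -> is_submod U' ->
  U `<=` addm D U' -> chain_between K U S r ->
  (jumps S r <= jumps (fun i => S i `&` D) r + jumps (fun i => addm (S i) D `&` U') r)%N.
Proof.
move=> hD hU' UDU' chS; apply: jumps_le_add => i lt_ir /(jump_split hD chS lt_ir).
case=> [|[z [s Ss [d Dd <-]] notSDz]]; [by left | right].
have [[hSi _ _] [hSi1 _ Si1U]] := (chS.1 i (ltnW lt_ir), chS.1 i.+1 lt_ir).
have [d' Dd' [u U'u def_s]] := UDU' s (Si1U s Ss).
exists u.
  split=> //; exists s => //; exists (- d'); first exact: submodN.
  by rewrite -def_s addrC addKr.
move=> [SDu _]; apply: notSDz; rewrite -def_s [d' + u]addrC -addrA.
by apply: (submodD (submod_addm hSi hD)) => //; apply: (addm_subr hSi); apply: submodD.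
Qed.

End Length.

Lemma sum_ord_lt a B : (a <= B)%N -> (\sum_(t < B) (t < a))%N = a.
Proof.
move=> le_aB; transitivity (\sum_(0 <= t < B | (t < a)%N) 1)%N.
  by rewrite [RHS]big_mkcond [RHS]big_mkord; apply: eq_bigr => t _; case: ltnP.
by rewrite -(big_nat_widen 0 a B xpredT (fun=> 1%N) le_aB) sum_nat_const_nat subn0 muln1.
Qed.

Section Counting.
Variables (n : nat) (k : 'I_n -> nat) (B : nat).
Hypothesis k_le_B : forall i, (k i <= B)%N.

(* For U = span P e with p^(k i) e i = 0, [count_above P t] bounds the length of
   the layer p^t U / p^(t+1) U. *)
Definition count_above (P : pred 'I_n) t := #|[pred i | P i && (t < k i)%N]|.

Definition length_bound j P := (\sum_(t < B) minn j (count_above P t))%N.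

Lemma length_boundD1 j (P : pred 'I_n) i : P i -> (forall i', P i' -> (k i' <= k i)%N) ->
  length_bound j.+1 P = (length_bound j [predD1 P & i] + k i)%N.
Proof.
move=> Pi k_max; rewrite /length_bound -[in RHS](sum_ord_lt (k_le_B i)) -big_split /=.
apply: eq_bigr => t _; rewrite /count_above (cardD1 i) inE Pi /=.
set c := #|_|; set c' := #|_|; have -> : c = c' by apply: eq_card => i'; rewrite !inE andbA.
case: ltnP => [_|le_kt]; first by rewrite add1n minnSS addn1.
suff -> : c' = 0%N by rewrite !minn0.
apply: eq_card0 => i'; rewrite !inE; apply/negbTE/andP => -[/andP[_ /k_max le_i'] lt_t].
by move: (leq_trans lt_t le_i'); rewrite ltnNge le_kt.
Qed.
Lemma sum_bool_card (P Q : pred 'I_n) : (\sum_(i | P i) Q i)%N = #|[pred i | P i && Q i]|.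
Proof. by rewrite -sum1_card [RHS]big_mkcondr /=; apply: eq_bigr => i _; case: (Q i). Qed.

Lemma exists_top_index (P : pred 'I_n) i1 : P i1 -> (0 < k i1)%N ->
  exists t, exists2 i0, P i0 & k i0 = t.+1 /\ forall i, P i -> (k i <= t.+1)%N.
Proof.
move=> Pi1 k1_gt0; case: (arg_maxnP k Pi1) => i0 Pi0 k_max.
by exists (k i0).-1, i0 => //; rewrite prednK ?(leq_trans k1_gt0 (k_max i1 Pi1)).
Qed.

Section Sorted.
Hypothesis k_sorted : forall i i' : 'I_n, (i <= i')%N -> (k i' <= k i)%N.

Lemma minn_count_above_sorted j t : (j <= n)%N ->
  minn j (count_above predT t) = (\sum_(i < n | (i < j)%N) (t < k i))%N.
Proof.
move=> le_jn; rewrite sum_bool_card.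
have card_lt_j : #|[pred i : 'I_n | (i < j)%N]| = j.
  rewrite -sum1_card -(big_mkord (fun i => (i < j)%N) (fun=> 1%N)).
  by rewrite -(big_nat_widen 0 j n xpredT (fun=> 1%N) le_jn) sum_nat_const_nat subn0 muln1.
have [[i0 lt_i0j le_ki0t] | above] := pselect (exists2 i0 : 'I_n, (i0 < j)%N & (k i0 <= t)%N).
  have lt_j i : (t < k i)%N -> (i < j)%N.
    rewrite !ltnNge; apply: contra => le_ji.
    exact: leq_trans (k_sorted (ltnW (leq_trans lt_i0j le_ji))) le_ki0t.
  have -> : #|[pred i : 'I_n | (i < j)%N && (t < k i)%N]| = count_above predT t.
    by apply: eq_card => i; rewrite !inE; case: (ltnP t (k i)) => [/lt_j ->|]; rewrite ?andbF.
  apply/minn_idPr; rewrite -[X in (_ <= X)%N]card_lt_j.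
  by apply/subset_leq_card/fintype.subsetP => i; rewrite !inE => /lt_j.
have all_above (i : 'I_n) : (i < j)%N -> (t < k i)%N.
  by move=> lt_ij; rewrite ltnNge; apply/negP => le_kt; apply: above; exists i.
have -> : #|[pred i : 'I_n | (i < j)%N && (t < k i)%N]| = j.
  by rewrite -[RHS]card_lt_j; apply: eq_card => i; rewrite !inE; case: ltnP => // /all_above ->.
apply/minn_idPl; rewrite -[X in (X <= _)%N]card_lt_j.
by apply/subset_leq_card/fintype.subsetP => i; rewrite !inE => /all_above.
Qed.

Lemma length_bound_sorted j : (j <= n)%N ->
  length_bound j predT = (\sum_(i < n | (i < j)%N) k i)%N.
Proof.
move=> le_jn; rewrite /length_bound.
under eq_bigr => t _ do rewrite (minn_count_above_sorted t le_jn).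
by rewrite exchange_big /=; apply: eq_bigr => i _; apply: sum_ord_lt.
Qed.
End Sorted.
End Counting.

Section Filtration.
Local Open Scope classical_set_scope.
Variables (R : idomainType) (M : lmodType R) (p : R).
Implicit Types (A B K U : set M).

Definition filtration K U t : set M := addm K [set p ^+ t *: y | y in U].

Lemma submod_scale_image t U : is_submod U -> is_submod [set p ^+ t *: y | y in U].
Proof.
move=> hU; split=> [|a _ _ [x Ux <-] [y Uy <-]].
  by exists 0; [apply: submod0 | rewrite scaler0].
by exists (a *: x + y); [apply: submodZD | rewrite scalerDr !scalerA mulrC].
Qed.

Lemma submod_filtration K U t : is_submod K -> is_submod U -> is_submod (filtration K U t).
Proof. by move=> hK hU; apply/submod_addm/submod_scale_image. Qed.

Lemma filtration_supK K U t : is_submod U -> K `<=` filtration K U t.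
Proof. by move=> hU; apply/addm_subl/submod_scale_image. Qed.

Lemma filtrationS K U t : is_submod U -> filtration K U t.+1 `<=` filtration K U t.
Proof.
move=> hU _ [a Ka [_ [y Uy <-] <-]]; exists a => //.
exists (p ^+ t *: (p *: y)); last by rewrite scalerA -exprSr.
by exists (p *: y) => //; apply: submodZ.
Qed.

Lemma filtration_sub K U t : is_submod U -> K `<=` U -> filtration K U t `<=` U.
Proof. by move=> hU KU; apply: addm_sub => // _ [y Uy <-]; apply: submodZ. Qed.

Lemma filtration0 K U : is_submod K -> U `<=` filtration K U 0.
Proof. by move=> hK y Uy; apply: addm_subr => //; exists y; rewrite ?expr0 ?scale1r. Qed.

Lemma length_le_between_layers K U (B : nat) (l : nat -> nat) :
  is_submod K -> is_submod U -> K `<=` U -> (forall y, U y -> p ^+ B *: y = 0) ->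
  (forall t, (t < B)%N -> length_le_between (filtration K U t.+1) (filtration K U t) (l t)) ->
  length_le_between K U (\sum_(t < B) l t)%N.
Proof.
move=> hK hU KU pBU len_layer.
have len_top t : (t <= B)%N -> length_le_between (filtration K U t) U (\sum_(s < t) l s)%N.
  elim: t => [_|t IH lt_tB]; first by rewrite big_ord0; apply/length_le_between0/filtration0.
  rewrite big_ord_recr /= addnC; apply: (length_le_between_trans (C := filtration K U t)).
  - exact: filtrationS.
  - exact: filtration_sub.
  - exact: submod_filtration.
  - by [].
  - exact: len_layer.
  - exact/IH/ltnW.
apply: length_le_between_sub (len_top B (leqnn B)) => // _ [a Ka [_ [y /pBU Uy <-] <-]].
by rewrite Uy addr0.
Qed.

Lemma length_le_layer0 K U m (Q : pred 'I_m) x t : is_submod K -> is_submod U ->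
  (forall l, Q l -> K (p ^+ t *: x l)) -> U `<=` addm K (span Q x) ->
  length_le_between (filtration K U t.+1) (filtration K U t) 0.
Proof.
move=> hK hU Kx UKx; apply: length_le_between0.
move=> _ [a Ka [_ [y /UKx [c Kc [s [b def_s] <-]] <-] <-]]; rewrite def_s.
apply: (filtration_supK t.+1 hU); apply: (submodD hK) => //.
rewrite scalerDr scaler_sumr; apply: (submodD hK); first exact: submodZ.
apply: submod_sum => // l Ql; rewrite scalerA mulrC -scalerA.
exact/(submodZ hK)/Kx.
Qed.


Section Uniformizer.
Hypothesis p_uniformizer : forall a : R, a != 0 ->
  exists u v, u \is a GRing.unit /\ a = u * p ^+ v.

Lemma unit_or_dvdp a : a \is a GRing.unit \/ exists b, a = b * p.
Proof.
have [->|/p_uniformizer [u [[|v] [Uu ->]]]] := eqVneq a 0.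
- by right; exists 0; rewrite mul0r.
- by left; rewrite expr0 mulr1.
- by right; exists (u * p ^+ v); rewrite exprSr mulrA.
Qed.

(* R/p is a field, so a quotient killed by p and spanned by one element is simple. *)
Lemma length_le_between_line A B g : is_submod A -> A (p *: g) ->
  B `<=` addm A (line g) -> length_le_between A B 1.
Proof.
move=> hA Apg BAg S r chS; apply: jumps_le1 => i i' lt_ii' lt_i'r [x Sx notSx].
have lt_ir := ltn_trans lt_ii' lt_i'r.
have [[hSi ASi _] [hSi1 ASi1 Si1B]] := (chS.1 i (ltnW lt_ir), chS.1 i.+1 lt_ir).
have [y Ay [_ [a ->] def_x]] := BAg x (Si1B x Sx).
have [Ua | [b def_a]] := unit_or_dvdp a; last first.
  move=> _; apply: notSx; rewrite -def_x def_a -scalerA.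
  by apply: (submodD hSi); apply: ASi => //; apply: submodZ.
have Si'g : S i' g.
  apply: (chain_between_le chS lt_ii' (ltnW lt_i'r)).
  have -> : g = a^-1 *: (x - y) by rewrite -def_x [y + _]addrC addrK scalerA mulVr ?scale1r.
  by apply: (submodZ hSi1); apply: (submodB hSi1) => //; apply: ASi1.
have [[hSi' ASi' _] [_ _ Si'1B]] := (chS.1 i' (ltnW lt_i'r), chS.1 i'.+1 lt_i'r).
move=> [z /Si'1B /BAg [y' Ay' [_ [a' ->] <-]]]; apply.
by apply: (submodD hSi'); [apply: ASi' | apply: submodZ].
Qed.

Lemma length_le_between_span A m (Q : pred 'I_m) g : is_submod A ->
  (forall l, Q l -> A (p *: g l)) -> length_le_between A (addm A (span Q g)) #|Q|.
Proof.
move=> hA; move cQ: #|Q| => c; elim: c Q cQ => [|c IH] Q cardQ ApQ.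
  apply: length_le_between0; apply: addm_sub => // x /(span_card0 cardQ) ->.
  exact: submod0.
have /card_gt0P [l Ql] : (0 < #|Q|)%N by rewrite cardQ.
set Q' := [predD1 Q & l].
have cardQ' : #|Q'| = c by move: cardQ; rewrite (cardD1 l) Ql => -[].
have hAQ' := submod_addm hA (span_submod Q' g).
rewrite -addn1; apply: (length_le_between_trans (C := addm A (span Q' g))) => //.
- exact/addm_subl/span_submod.
- apply: addm_sub (submod_addm hA (span_submod Q g)) (addm_subl _) _ => //.
    exact: span_submod.
  by apply: subset_trans (addm_subr hA); apply: span_subset => l' /andP[].
- exact: submod_addm hA (span_submod Q g).
- by apply: IH => // l' /andP[_ /ApQ].
apply: (length_le_between_line hAQ' (addm_subl (span_submod _ _) (ApQ l Ql))).
move=> _ [a Aa [_ /(span_D1 Ql) [y Q'y [_ [c' ->] <-]] <-]].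
by rewrite addrA; exists (a + y); [exists a => //; exists y | exists (c' *: g l) => //; exists c'].
Qed.

Lemma length_le_between_cyclic t A g : is_submod A -> A (p ^+ t *: g) ->
  length_le_between A (addm A (line g)) t.
Proof.
elim: t g => [|t IH] g hA Apg.
  apply: length_le_between0; apply: addm_sub => // _ [c ->].
  by apply: submodZ; rewrite // -[g]scale1r -(expr0 p).
have hAg := submod_addm hA (line_submod g).
rewrite -addn1; apply: (length_le_between_trans (C := addm A (line (p *: g)))) => //.
- exact/addm_subl/line_submod.
- apply: addm_sub hAg (addm_subl _) _ => //; first exact: line_submod.
  by move=> _ [c ->]; apply: addm_subr => //; exists (c * p); rewrite scalerA.
- exact: submod_addm (line_submod _).
- by apply: IH; rewrite // scalerA -exprSr.
apply: length_le_between_line (submod_addm hA (line_submod _)) _ _.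
- by apply: addm_subr => //; exists 1; rewrite scale1r.
- move=> _ [a Aa [y [c ->] <-]]; exists a; first exact: addm_subl (line_submod _) _ Aa.
  by exists (c *: g) => //; exists c.
Qed.

Lemma line_meet_eq0 K g t : is_submod K -> p ^+ t.+1 *: g = 0 -> ~ K (p ^+ t *: g) ->
  forall c, K (c *: g) -> c *: g = 0.
Proof.
move=> hK ptg notK c Kcg.
have [->|/p_uniformizer [u [v [Uu def_c]]]] := eqVneq c 0; first by rewrite scale0r.
have [le_tv|lt_vt] := leqP t.+1 v.
  by rewrite def_c -scalerA -(subnK le_tv) exprD -scalerA ptg !scaler0.
case: notK; have := submodZ hK (u^-1 * p ^+ (t - v)) Kcg.
by rewrite scalerA def_c mulrACA mulVr // mul1r -exprD subnK // -ltnS.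
Qed.

Lemma jumps_le_cyclic_reduce K U U' g S r t : is_submod K -> is_submod U' ->
  U `<=` addm (line g) U' -> p ^+ t *: g = 0 -> chain_between K U S r ->
  (jumps S r <= t + jumps (fun i => addm (S i) (addm K (line g)) `&` U') r)%N.
Proof.
move=> hK hU' splitU ptg chS; have hD := submod_addm hK (line_submod g).
apply: leq_trans (jumps_le_cap_addm hD hU' _ chS) _.
  move=> y /splitU [_ [c ->] [u U'u <-]]; exists (c *: g); last by exists u.
  by apply: (addm_subr hK); exists c.
have Kptg : K (p ^+ t *: g) by rewrite ptg; apply: submod0.
have lenKD : length_le_between (K `&` addm K (line g)) (U `&` addm K (line g)) t.
  apply: length_le_between_sub (length_le_between_cyclic hK Kptg) => [z Kz|]; last exact: subIsetr.
  by split=> //; apply: addm_subl (line_submod g) _ Kz.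
exact: leq_add (lenKD _ _ (chain_betweenI hD chS)) (leqnn _).
Qed.

Lemma length_le_layer_gen K U m (Q : pred 'I_m) x t : is_submod K -> is_submod U ->
  (forall l, Q l -> U (x l)) -> U `<=` addm K (span Q x) ->
  length_le_between (filtration K U t.+1) (filtration K U t) #|Q|.
Proof.
move=> hK hU Ux UKx; have hF := submod_filtration t.+1 hK hU.
apply: (length_le_between_sub _ _ (length_le_between_span
  (g := fun l => p ^+ t *: x l) hF _)) => //.
- move=> _ [a Ka [_ [y /UKx [c Kc [s [b def_s] <-]] <-]] <-]; rewrite def_s.
  exists (a + p ^+ t *: c).
    by apply: filtration_supK => //; apply: (submodD hK) => //; apply: submodZ.
  exists (\sum_(l | Q l) b l *: (p ^+ t *: x l)); first by exists b.
  rewrite scalerDr scaler_sumr addrA; congr (_ + _).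
  by apply: eq_bigr => l _; rewrite !scalerA mulrC.
- move=> l Ql; apply: (addm_subr hK).
  by exists (x l); [apply: Ux | rewrite scalerA -exprS].
Qed.


Section Generators.
Variables (n : nat) (e : 'I_n -> M) (k : 'I_n -> nat).
Hypothesis pk_e : forall i, p ^+ k i *: e i = 0.
Variable B : nat.
Hypothesis k_le_B : forall i, (k i <= B)%N.

Lemma scale_e_eq0 i s : (k i <= s)%N -> p ^+ s *: e i = 0.
Proof. by move=> /subnK <-; rewrite exprD -scalerA pk_e scaler0. Qed.

Lemma span_e_annihilated (P : pred 'I_n) s y : (forall i, P i -> (k i <= s)%N) ->
  span P e y -> p ^+ s *: y = 0.
Proof.
move=> le_ks [a ->]; rewrite scaler_sumr big1 // => i Pi.
by rewrite scalerA mulrC -scalerA scale_e_eq0 ?scaler0 ?le_ks.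
Qed.

Lemma length_le_layer_e K (P : pred 'I_n) t : is_submod K ->
  length_le_between (filtration K (span P e) t.+1) (filtration K (span P e) t) (count_above k P t).
Proof.
move=> hK; have hU := span_submod P e; have hF := submod_filtration t.+1 hK hU.
apply: (length_le_between_sub _ _ (length_le_between_span
  (g := fun i => p ^+ t *: e i) hF _)) => //.
- move=> _ [a Ka [_ [y [b def_y] <-]] <-]; rewrite def_y; exists a; first exact: filtration_supK.
  exists (\sum_(i | P i && (t < k i)%N) b i *: (p ^+ t *: e i)); first by exists b.
  congr (_ + _); rewrite scaler_sumr [RHS](bigID (fun i => (t < k i)%N)) /=.
  rewrite [X in _ = _ + X]big1 ?addr0.
    by apply: eq_bigr => i _; rewrite !scalerA mulrC.
  by move=> i /andP[_]; rewrite -leqNgt scalerA mulrC -scalerA => /scale_e_eq0 ->; rewrite scaler0.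
- move=> i /andP[Pi _]; apply: (addm_subr hK).
  by exists (e i); [apply: span_gen | rewrite scalerA -exprS].
Qed.


Lemma length_le_layer_min K m (Q : pred 'I_m) x P t : is_submod K ->
  generated_mod K (span P e) Q x ->
  length_le_between (filtration K (span P e) t.+1) (filtration K (span P e) t)
    (minn #|Q| (count_above k P t)).
Proof.
move=> hK [_ Ux UKx]; have [_|_] := leqP #|Q| (count_above k P t).
  exact: length_le_layer_gen (span_submod P e) Ux UKx.
exact: length_le_layer_e.
Qed.

Lemma length_le_bound m (Q : pred 'I_m) x P K : is_submod K ->
  generated_mod K (span P e) Q x -> length_le_between K (span P e) (length_bound k B #|Q| P).
Proof.
move=> hK genx; have [KU _ _] := genx; rewrite /length_bound.
apply: (length_le_between_layers (l := fun t => minn #|Q| (count_above k P t)))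
  => //; first exact: span_submod.
  by move=> y; apply: span_e_annihilated.
by move=> t _; apply: length_le_layer_min hK genx.
Qed.

Lemma exists_unit_coef (P : pred 'I_n) (a : 'I_n -> R) t :
  (forall i, P i -> (k i <= t.+1)%N) -> p ^+ t *: (\sum_(i | P i) a i *: e i) != 0 ->
  exists i, [/\ P i, k i = t.+1 & a i \is a GRing.unit].
Proof.
move=> le_k; apply: contraNP => none; apply/eqP.
rewrite scaler_sumr big1 // => i Pi; rewrite scalerA.
have [Ua|[b ->]] := unit_or_dvdp (a i); last first.
  by rewrite mulrCA -exprSr -scalerA scale_e_eq0 ?scaler0 ?le_k.
rewrite mulrC -scalerA scale_e_eq0 ?scaler0 // -ltnS ltn_neqAle le_k // andbT.
by apply/eqP => kt; apply: none; exists i.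
Qed.

(* Otherwise layer t of (span P e)/K vanishes and the length bound is not reached. *)
Lemma exists_gen_notin m (Q : pred 'I_m) x P K S r t : is_submod K ->
  generated_mod K (span P e) Q x -> chain_between K (span P e) S r ->
  (length_bound k B #|Q| P <= jumps S r)%N ->
  (t < B)%N -> (0 < #|Q|)%N -> (0 < count_above k P t)%N ->
  exists2 l, Q l & ~ K (p ^+ t *: x l).
Proof.
move=> hK genx chS len_ge lt_tB Q_gt0 cnt_gt0; apply: contrapT => none.
have Kx l : Q l -> K (p ^+ t *: x l).
  by move=> Ql; apply: contrapT => notK; apply: none; exists l.
have [KU _ UKx] := genx.
pose l' s := if s == t then 0%N else minn #|Q| (count_above k P s).
have len_le : length_le_between K (span P e) (\sum_(s < B) l' s)%N.
  apply: (length_le_between_layers (l := l') hK (span_submod P e) KU) => [y|s _].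
    exact: span_e_annihilated.
  rewrite /l'; case: eqP => [->|_]; last exact: length_le_layer_min hK genx.
  exact: length_le_layer0 hK (span_submod P e) Kx UKx.
have := leq_trans len_ge (len_le S r chS).
rewrite /length_bound (bigD1 (Ordinal lt_tB)) // [X in (_ <= X)%N](bigD1 (Ordinal lt_tB)) //=.
rewrite /l' eqxx add0n [X in (_ <= X)%N](eq_bigr (fun s : 'I_B => minn #|Q| (count_above k P s))).
  by rewrite -[X in (_ <= X)%N]add0n leq_add2r leqNgt leq_min Q_gt0 cnt_gt0.
by move=> s; rewrite -val_eqE /= => /negbTE ->.
Qed.

Lemma complement_of_length_ge m (Q : pred 'I_m) x P K S r : is_submod K ->
  generated_mod K (span P e) Q x -> chain_between K (span P e) S r ->
  (length_bound k B #|Q| P <= jumps S r)%N -> exists C, complement K (span P e) C.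
Proof.
move cQ : #|Q| => j; have hU := span_submod P e.
elim: j m Q x P K S r cQ hU => [|j IH] m Q x P K S r cQ hU hK genx chS len_ge.
  have [_ _ UKx] := genx; exists [set 0]; apply: complement0 hU _.
  by move=> y /UKx [kk Kk [s /(span_card0 cQ) -> <-]]; rewrite addr0.
have [_ Ux _] := genx.
have [[i1 Pi1 k1_gt0] | all0] := pselect (exists2 i, P i & (0 < k i)%N); last first.
  exists [set 0]; apply: complement0 hU _ => y Uy.
  rewrite -[y]scale1r -(expr0 p) (span_e_annihilated (s := 0) _ Uy); first exact: submod0.
  by move=> i Pi; rewrite leqNgt; apply/negP => k_gt0; apply: all0; exists i.
have [t [i0 Pi0 [kt k_max]]] := exists_top_index Pi1 k1_gt0.
have [l0 Ql0 notK] : exists2 l, Q l & ~ K (p ^+ t *: x l).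
  apply: exists_gen_notin hK genx chS _ _ _ _; rewrite ?cQ //; first by rewrite -kt k_le_B.
  by apply/card_gt0P; exists i0; rewrite inE Pi0 kt ltnSn.
set g := x l0; have [a def_g] := Ux l0 Ql0.
have [i2 [Pi2 ki2 Ua]] : exists i, [/\ P i, k i = t.+1 & a i \is a GRing.unit].
  apply: exists_unit_coef => [i /k_max //|].
  by rewrite -def_g; apply/eqP => g0; apply: notK; rewrite g0; apply: submod0.
set U' := span [predD1 P & i2] e; have hU' : is_submod U' := span_submod _ e.
have splitU : span P e `<=` addm (line g) U' by rewrite /g def_g; apply: span_split_unit.
have U'U : U' `<=` span P e by apply: span_subset => i /andP[].
have ptg : p ^+ t.+1 *: g = 0.
  exact: span_e_annihilated (Ux l0 Ql0).
have [x' genx'] := generated_mod_reduce hK hU' U'U splitU Ql0 genx.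
set D := addm K (line g); have hD : is_submod D := submod_addm hK (line_submod g).
have chS' : chain_between (D `&` U') U' (fun i => addm (S i) D `&` U') r.
  by apply: chain_between_sub (chain_betweenI hU' (chain_between_addm hD chS)).
have jumps_le := jumps_le_cyclic_reduce hK hU' splitU ptg chS.
have cQ' : #|[predD1 Q & l0]| = j by move: cQ; rewrite (cardD1 l0) [_ \in _]Ql0 => -[].
have [|C' compC'] := IH _ _ x' _ _ _ r cQ' hU' (submodI hD hU') genx' chS'.
  have k_max2 i : P i -> (k i <= k i2)%N by rewrite ki2; apply: k_max.
  move: (leq_trans len_ge jumps_le).
  by rewrite (length_boundD1 k_le_B _ Pi2 k_max2) ki2 addnC leq_add2l.
exists (addm (line g) C').
exact: complement_addm_line hK hU (Ux l0 Ql0) U'U splitU (line_meet_eq0 hK ptg notK) compC'.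
Qed.

End Generators.
End Uniformizer.
End Filtration.

Lemma ideal_pow_exp (R : idomainType) (I : R -> Prop) x t : I x -> ideal_pow I t (x ^+ t).
Proof.
move=> Ix; exists [:: (1, [tuple of nseq t x])]; split.
  by move=> _ /[!inE] /eqP-> r /=; rewrite mem_nseq => /andP[_ /eqP->].
by rewrite big_seq1 mul1r big_nseq iter_mulr_1.
Qed.

Section Quotient.
Local Open Scope classical_set_scope.
Variables (R : idomainType) (M N : lmodType R) (f : {linear M -> N}).
Hypothesis f_surj : forall y : N, exists x : M, f x = y.

Let K : set M := [set x | f x = 0].

Lemma submod_kernel : is_submod K.
Proof.
split=> [|a x y]; rewrite /K /= ?linear0 // => fx fy.
by rewrite linearP fx fy scaler0 addr0.
Qed.

Lemma chain_preimage S r : submod_chain S r ->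
  chain_between K setT (fun i => f @^-1` S i) r /\ jumps (fun i => f @^-1` S i) r = r.
Proof.
move=> [chS strict]; split.
  split=> [i /chS [S0 hS] | i /strict[incr _] x]; last exact: incr.
  split=> // [|x /= ->]; last exact: S0.
  by split=> [|a x y]; rewrite /preimage /= ?linear0 // linearP; apply: hS.
rewrite /jumps -[RHS]card_ord -sum1_card; apply: eq_bigr => i _.
have [_ [y [Sy notSy]]] := strict i (ltn_ord i); case: asboolP => // [[]].
by have [x fx] := f_surj y; exists x; rewrite /= fx.
Qed.

Lemma generated_mod_kernel m (x : 'I_m -> M) :
  (forall y : N, exists a : 'I_m -> R, y = \sum_(l < m) a l *: f (x l)) ->
  generated_mod K setT predT x.
Proof.
move=> gen_fx; split=> // y _; have [a fy] := gen_fx (f y).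
set w := \sum_(l < m) a l *: x l.
exists (y - w); last by exists w; [exists a | rewrite subrK].
rewrite /K /= linearB linear_sum fy; apply/eqP; rewrite subr_eq0; apply/eqP.
by apply: eq_bigr => l _; rewrite linearZ.
Qed.

Lemma complement_summand C : complement K setT C -> quotient_is_summand f.
Proof.
move=> [hC _ CK0 TCK]; exists C; split=> //; split=> [x Cx fx0|x]; first exact: CK0.
by have [c Cc [y fy0 <-]] := TCK x I; exists c, y.
Qed.

End Quotient.

Lemma sum_of_cyclics_gens (R : idomainType) (M : lmodType R) n (k : 'I_n -> nat) p :
  p \isn't a GRing.unit -> is_sum_of_cyclics M (@max_ideal R) k ->
  exists e : 'I_n -> M, span predT e = setT /\ forall i, p ^+ k i *: e i = 0.
Proof.
move=> p_nunit [e [span_e rel_e]]; exists e; split.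
  by apply/seteqP; split=> // x _; have [a ->] := span_e x; exists a.
move=> i; have <- : \sum_(l < n) (if l == i then p ^+ k i else 0) *: e l = p ^+ k i *: e i.
  by rewrite (bigD1 i) //= eqxx big1 ?addr0 // => l /negbTE ->; rewrite scale0r.
apply/rel_e => l; case: eqP => [->|_]; first exact: ideal_pow_exp.
by exists [::]; rewrite big_nil.
Qed.

Theorem lemma4p6 (R : idomainType) (hR : is_dvr R)
    (M N : lmodType R) (n : nat) (k : 'I_n -> nat)
    (hk : forall i i' : 'I_n, (i <= i')%N -> (k i' <= k i)%N)
    (hM : is_sum_of_cyclics M (@max_ideal R) k)
    (f : {linear M -> N}) (hf : forall y : N, exists x : M, f x = y)
    (j : nat) (hjn : (j <= n)%N) (hN : generated_by N j) :
  length_le N (\sum_(i < n | (i < j)%N) k i) /\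
  (has_length N (\sum_(i < n | (i < j)%N) k i) -> quotient_is_summand f).
Proof.
have [p [_ [p_nunit p_unif]]] := hR.
have [e [span_e pk_e]] := sum_of_cyclics_gens p_nunit hM.
have [g gen_g] := hN.
have /choice [x fx] : forall l, exists x, f x = g l by move=> l; apply: hf.
have genx : generated_mod [set x | f x = 0]%classic (span predT e) predT x.
  rewrite span_e; apply: generated_mod_kernel => y; have [a ->] := gen_g y.
  by exists a; apply: eq_bigr => l _; rewrite fx.
pose B := (\max_(i < n) k i)%N; have k_le_B i : (k i <= B)%N := leq_bigmax i.
have bound_eq : length_bound k B #|predT : pred 'I_j| predT = (\sum_(i < n | (i < j)%N) k i)%N.
  by rewrite cardT size_enum_ord; apply: length_bound_sorted.
have hK := submod_kernel f; rewrite -bound_eq.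
split=> [S r /(chain_preimage hf) [+ <-] | [_ [S /(chain_preimage hf) [chS jumpsS]]]].
  by rewrite -span_e; apply: (length_le_bound p_unif pk_e k_le_B hK genx).
rewrite -span_e in chS; have [|C] := complement_of_length_ge p_unif pk_e k_le_B hK genx chS.
  by rewrite jumpsS.
by rewrite span_e; apply: complement_summand.
Qed.
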